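(* Let $\Gamma$ be a $W$-generic metric graph, with $W:\Gamma\to\mathbb{R}$ of class $C^1$, and let $f_k$, $\lambda_k$ be the eigenfunctions and eigenvalues of $H_W=-\frac{\partial^2}{\partial x^2}+W$ with Dirichlet boundary and Neumann–Kirchhoff vertex conditions. Let $k_1<\dots<k_M$ and nonzero reals $a_1,\dots,a_M$ be given, and define $g(x,y)=\sum_{i=1}^{M}a_ie^{-\lambda_{k_i}y}f_{k_i}(x)$ for $x\in\Gamma$, $y\in\mathbb{R}$, and $F_y(x):=g(x,y)$. Then for every $y\in\mathbb{R}$, $F_y$ is not identically zero on any open subset of $\Gamma$.
   Context: A metric graph is connected with finitely many edges of finite length, each identified with an interval. $H_W$ acts edgewise on $\bigoplus_e H^2(e)$ with Dirichlet conditions at degree-one vertices and, at inner vertices (degree $\ge2$), continuity and vanishing sum of the outgoing derivatives. Eigenvalues $\lambda_1\le\lambda_2\le\dots$ are counted with multiplicity, with $L^2$-orthogonal eigenfunctions $f_k$. $\Gamma$ is $W$-generic if no eigenfunction of $H_W$ vanishes at an inner vertex (so all eigenvalues are simple). *)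

From Stdlib Require Import Reals Lra Relations.
From Coquelicot Require Import Coquelicot.
Open Scope R_scope.

(* Vertices are 0..nV-1, edges are 0..nE-1.  Edge e is identified with the
   interval [0, len e]; coordinate 0 is the endpoint [src e], coordinate
   [len e] is the endpoint [tgt e].  Loops and multiple edges are allowed. *)
Record metric_graph := MetricGraph {
  nV : nat;
  nE : nat;
  src : nat -> nat;
  tgt : nat -> nat;
  len : nat -> R
}.

Fixpoint sumR (n : nat) (f : nat -> R) : R :=
  match n with O => 0 | S m => sumR m f + f m end.

Fixpoint sumN (n : nat) (f : nat -> nat) : nat :=
  match n with O => O | S m => (sumN m f + f m)%nat end.

Definition end_vertex (G : metric_graph) (e : nat) (b : bool) : nat :=
  if b then tgt G e else src G e.
Definition end_pos (G : metric_graph) (e : nat) (b : bool) : R :=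
  if b then len G e else 0.

(* degree of a vertex (a loop counts twice) *)
Definition deg (G : metric_graph) (v : nat) : nat :=
  sumN (nE G) (fun e =>
    ((if Nat.eqb (src G e) v then 1 else 0) + (if Nat.eqb (tgt G e) v then 1 else 0))%nat).

Definition adjacent (G : metric_graph) (v w : nat) : Prop :=
  exists e, (e < nE G)%nat /\
    ((src G e = v /\ tgt G e = w) \/ (src G e = w /\ tgt G e = v)).

Definition metric_graph_wf (G : metric_graph) : Prop :=
  (0 < nE G)%nat /\
  (forall e, (e < nE G)%nat ->
     0 < len G e /\ (src G e < nV G)%nat /\ (tgt G e < nV G)%nat) /\
  (forall v w, (v < nV G)%nat -> (w < nV G)%nat ->
     clos_refl_trans nat (adjacent G) v w).

(* points of Gamma: pairs (e, t) with e an edge and t in [0, len e] *)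
Definition is_point (G : metric_graph) (e : nat) (t : R) : Prop :=
  (e < nE G)%nat /\ 0 <= t <= len G e.

Definition same_vertex (G : metric_graph) (e1 : nat) (b1 : bool) (e2 : nat) (b2 : bool) : Prop :=
  (e1 < nE G)%nat /\ (e2 < nE G)%nat /\ end_vertex G e1 b1 = end_vertex G e2 b2.

(* A subset of Gamma (given edgewise) is open in the metric-graph topology:
   it is well defined at vertices (the copies of a vertex on the incident edges
   are identified), and every point has an epsilon-neighbourhood in Gamma
   (along its edge, and, for a vertex, along all incident edges) inside U. *)
Definition graph_open (G : metric_graph) (U : nat -> R -> Prop) : Prop :=
  (forall e1 b1 e2 b2, same_vertex G e1 b1 e2 b2 ->
     (U e1 (end_pos G e1 b1) <-> U e2 (end_pos G e2 b2))) /\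
  (forall e t, is_point G e t -> U e t ->
     exists eps, 0 < eps /\
       (forall u, 0 <= u <= len G e -> Rabs (u - t) < eps -> U e u) /\
       (forall b e' b', t = end_pos G e b -> same_vertex G e b e' b' ->
          forall u, 0 <= u <= len G e' -> Rabs (u - end_pos G e' b') < eps -> U e' u)).

Definition deriv_within (L : R) (f : R -> R) (t d : R) : Prop :=
  forall eps, 0 < eps -> exists delta, 0 < delta /\
    forall u, 0 <= u <= L -> Rabs (u - t) < delta ->
      Rabs (f u - f t - d * (u - t)) <= eps * Rabs (u - t).

Definition cont_within (L : R) (f : R -> R) (t : R) : Prop :=
  forall eps, 0 < eps -> exists delta, 0 < delta /\
    forall u, 0 <= u <= L -> Rabs (u - t) < delta -> Rabs (f u - f t) < eps.

(* Functions on Gamma are given edgewise: f e t for t in [0, len e]. *)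

Definition potential_C1 (G : metric_graph) (W : nat -> R -> R) : Prop :=
  (forall e, (e < nE G)%nat -> exists dW : R -> R,
     forall t, 0 <= t <= len G e ->
       deriv_within (len G e) (W e) t (dW t) /\ cont_within (len G e) dW t) /\
  (forall e1 b1 e2 b2, same_vertex G e1 b1 e2 b2 ->
     W e1 (end_pos G e1 b1) = W e2 (end_pos G e2 b2)).

(* f is a nonzero eigenfunction of H_W = -d^2/dx^2 + W with eigenvalue lam,
   Dirichlet conditions at degree-one vertices, continuity + Kirchhoff
   (vanishing sum of outgoing derivatives) at inner vertices. *)
Definition is_eigenpair (G : metric_graph) (W : nat -> R -> R) (lam : R)
    (f : nat -> R -> R) : Prop :=
  (exists D1 D2 : nat -> R -> R,
    (forall e, (e < nE G)%nat -> forall t, 0 <= t <= len G e ->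
       deriv_within (len G e) (f e) t (D1 e t) /\
       deriv_within (len G e) (D1 e) t (D2 e t) /\
       - D2 e t + W e t * f e t = lam * f e t) /\
    (forall v, (v < nV G)%nat ->
       ((deg G v = 1%nat ->
           forall e b, (e < nE G)%nat -> end_vertex G e b = v -> f e (end_pos G e b) = 0) /\
        ((2 <= deg G v)%nat ->
           (forall e1 b1 e2 b2, same_vertex G e1 b1 e2 b2 -> end_vertex G e1 b1 = v ->
              f e1 (end_pos G e1 b1) = f e2 (end_pos G e2 b2)) /\
           sumR (nE G) (fun e =>
              (if Nat.eqb (src G e) v then D1 e 0 else 0) +
              (if Nat.eqb (tgt G e) v then - D1 e (len G e) else 0)) = 0)))) /\
  (exists e t, is_point G e t /\ f e t <> 0).

Definition l2_inner (G : metric_graph) (f g : nat -> R -> R) : R :=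
  sumR (nE G) (fun e => RInt (fun t => f e t * g e t) 0 (len G e)).

(* (lam k, f k)_k is the full list of eigenvalues counted with multiplicity,
   in nondecreasing order, with L^2-orthogonal eigenfunctions:
   every eigenfunction is non-orthogonal to some f k (so the f k with
   lam k = mu span the mu-eigenspace). *)
Definition eigen_enumeration (G : metric_graph) (W : nat -> R -> R)
    (lam : nat -> R) (f : nat -> nat -> R -> R) : Prop :=
  (forall k, is_eigenpair G W (lam k) (f k)) /\
  (forall j k, (j <= k)%nat -> lam j <= lam k) /\
  (forall j k, j <> k -> l2_inner G (f j) (f k) = 0) /\
  (forall mu g, is_eigenpair G W mu g -> exists k, l2_inner G (f k) g <> 0).

Definition W_generic (G : metric_graph) (W : nat -> R -> R) : Prop :=
  forall mu g, is_eigenpair G W mu g ->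
    forall e b, (e < nE G)%nat -> (2 <= deg G (end_vertex G e b))%nat ->
      g e (end_pos G e b) <> 0.

(* Suppose F_y vanishes on an open set, hence on a relative neighbourhood J of a point of
   some edge, and put c_i = a_i exp(-lambda_{k_i} y).  On J the operator H_W multiplies
   the coefficients of sum_i c_i f_{k_i} by the eigenvalues, so every polynomial in H_W
   preserves its vanishing; the polynomial killing all eigenvalues but nu = lambda_{k_1}
   shows that the nu-part h = sum_{lambda_{k_i} = nu} c_i f_{k_i} vanishes on J.  Now h
   solves -h'' + W h = nu h with the vertex conditions, so by uniqueness for this linear
   ODE it vanishes on the whole edge.  If an end of the edge is an inner vertex, genericity
   forbids h from being an eigenfunction, so h = 0; otherwise connectedness makes the edge
   all of Gamma.  Pairing h = 0 with f_{k_1} and using orthogonality gives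
   c_1 |f_{k_1}|^2 = 0, contradicting a_1 <> 0. *)

From Stdlib Require Import Reals Lra Lia Relations Classical IndefiniteDescription.
From Coquelicot Require Import Coquelicot.
Open Scope R_scope.

Lemma sumR_ext n f g : (forall i, (i < n)%nat -> f i = g i) -> sumR n f = sumR n g.
Proof.
  induction n as [|n IH]; intros H; simpl; [reflexivity|].
  rewrite IH by (intros; apply H; lia). rewrite H by lia. reflexivity.
Qed.

Lemma sumR_plus n f g : sumR n (fun i => f i + g i) = sumR n f + sumR n g.
Proof. induction n as [|n IH]; simpl; [|rewrite IH]; lra. Qed.

Lemma sumR_scal n c f : sumR n (fun i => c * f i) = c * sumR n f.
Proof. induction n as [|n IH]; simpl; [|rewrite IH]; lra. Qed.

Lemma sumR_opp n f : sumR n (fun i => - f i) = - sumR n f.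
Proof. induction n as [|n IH]; simpl; [|rewrite IH]; lra. Qed.

Lemma sumR_minus n f g : sumR n (fun i => f i - g i) = sumR n f - sumR n g.
Proof. induction n as [|n IH]; simpl; [|rewrite IH]; lra. Qed.

Lemma sumR_zero n f : (forall i, (i < n)%nat -> f i = 0) -> sumR n f = 0.
Proof.
  induction n as [|n IH]; intros H; simpl; [reflexivity|].
  rewrite IH by (intros; apply H; lia). rewrite H by lia. lra.
Qed.

Lemma sumR_swap n m (F : nat -> nat -> R) :
  sumR n (fun i => sumR m (F i)) = sumR m (fun j => sumR n (fun i => F i j)).
Proof.
  induction n as [|n IH]; simpl.
  - symmetry; apply sumR_zero; reflexivity.
  - rewrite IH, <- sumR_plus; reflexivity.
Qed.

Lemma sumR_single n f j : (j < n)%nat -> (forall i, (i < n)%nat -> i <> j -> f i = 0) ->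
  sumR n f = f j.
Proof.
  induction n as [|n IH]; intros Hj H; simpl; [lia|].
  destruct (Nat.eq_dec j n) as [->|Hne].
  - rewrite sumR_zero by (intros; apply H; lia). lra.
  - rewrite IH by (try intros; try apply H; lia). rewrite (H n) by lia. lra.
Qed.

Lemma sumR_nonneg n f : (forall i, (i < n)%nat -> 0 <= f i) -> 0 <= sumR n f.
Proof.
  induction n as [|n IH]; intros H; simpl; [lra|].
  specialize (IH (fun i Hi => H i ltac:(lia))). specialize (H n ltac:(lia)). lra.
Qed.

Lemma sumR_pos n f j : (j < n)%nat -> (forall i, (i < n)%nat -> 0 <= f i) -> 0 < f j ->
  0 < sumR n f.
Proof.
  induction n as [|n IH]; intros Hj H Hpos; simpl; [lia|].
  destruct (Nat.eq_dec j n) as [->|Hne].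
  - pose proof (sumR_nonneg n f (fun i Hi => H i ltac:(lia))). lra.
  - specialize (IH ltac:(lia) (fun i Hi => H i ltac:(lia)) Hpos). specialize (H n ltac:(lia)). lra.
Qed.

(** * Spectral projection of linear relations *)

Fixpoint annihilator (mu : nat -> R) (nu : R) (m : nat) (x : R) : R :=
  match m with
  | O => 1
  | S m => annihilator mu nu m x * (if Req_EM_T (mu m) nu then 1 else x - mu m)
  end.

Lemma annihilator_root mu nu m i : (i < m)%nat -> mu i <> nu -> annihilator mu nu m (mu i) = 0.
Proof.
  induction m as [|m IH]; intros Hi Hne; simpl; [lia|].
  destruct (Nat.eq_dec i m) as [->|Him].
  - destruct (Req_EM_T (mu m) nu); [contradiction | ring].
  - rewrite (IH ltac:(lia) Hne). ring.
Qed.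

Lemma annihilator_neq0 mu nu m : annihilator mu nu m nu <> 0.
Proof.
  induction m as [|m IH]; simpl; [lra|].
  apply Rmult_integral_contrapositive; split; [exact IH|].
  destruct (Req_EM_T (mu m) nu) as [|Hne]; [lra|]. intros E; apply Hne; lra.
Qed.

(* Stability under multiplication by [mu] gives stability under every polynomial in [mu];
   [annihilator mu nu M] vanishes at each [mu i <> nu] but not at [nu]. *)
Lemma relation_spectral_projection {X : Type} (P : X -> Prop) M (v : nat -> X -> R)
    (mu : nat -> R) :
  let relation w := forall x, P x -> sumR M (fun i => w i * v i x) = 0 in
  (forall w, relation w -> relation (fun i => mu i * w i)) ->
  forall w nu, relation w -> relation (fun i => if Req_EM_T (mu i) nu then w i else 0).
Proof.
  intros relation Hstable w nu Hw.
  assert (Hpoly : forall m, relation (fun i => annihilator mu nu m (mu i) * w i)).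
  { induction m as [|m IH]; simpl.
    - intros x Px. rewrite <- (Hw x Px). apply sumR_ext. intros; ring.
    - destruct (Req_EM_T (mu m) nu).
      + intros x Px. rewrite <- (IH x Px). apply sumR_ext. intros; ring.
      + intros x Px.
        transitivity (sumR M (fun i => mu i * (annihilator mu nu m (mu i) * w i) * v i x)
          - mu m * sumR M (fun i => annihilator mu nu m (mu i) * w i * v i x)).
        * rewrite <- sumR_scal, <- sumR_minus. apply sumR_ext. intros; ring.
        * rewrite (Hstable _ IH x Px), (IH x Px). ring. }
  intros x Px.
  apply (Rmult_eq_reg_l (annihilator mu nu M nu)); [|apply annihilator_neq0].
  rewrite Rmult_0_r, <- sumR_scal. etransitivity; [|exact (Hpoly M x Px)].
  apply sumR_ext. intros i Hi; cbv beta.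
  destruct (Req_EM_T (mu i) nu) as [->|Hne]; [ring|].
  rewrite (annihilator_root mu nu M i Hi Hne). ring.
Qed.

Lemma deriv_within_plus L f g u df dg : deriv_within L f u df -> deriv_within L g u dg ->
  deriv_within L (fun x => f x + g x) u (df + dg).
Proof.
  intros Hf Hg eps Heps.
  destruct (Hf (eps / 2) ltac:(lra)) as [d1 [Hd1 H1]].
  destruct (Hg (eps / 2) ltac:(lra)) as [d2 [Hd2 H2]].
  exists (Rmin d1 d2); split; [apply Rmin_glb_lt; assumption|].
  intros v Hv Hvu. pose proof (Rmin_l d1 d2); pose proof (Rmin_r d1 d2).
  specialize (H1 v Hv ltac:(lra)); specialize (H2 v Hv ltac:(lra)).
  replace (f v + g v - (f u + g u) - (df + dg) * (v - u))
    with ((f v - f u - df * (v - u)) + (g v - g u - dg * (v - u))) by ring.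
  eapply Rle_trans; [apply Rabs_triang | lra].
Qed.

Lemma deriv_within_scal L f u df c : deriv_within L f u df ->
  deriv_within L (fun x => c * f x) u (c * df).
Proof.
  intros Hf eps Heps.
  pose proof (Rabs_pos c) as Hc.
  destruct (Hf (eps / (Rabs c + 1))) as [d [Hd H]]; [apply Rdiv_lt_0_compat; lra|].
  exists d; split; [assumption|]. intros v Hv Hvu. specialize (H v Hv Hvu).
  replace (c * f v - c * f u - c * df * (v - u)) with (c * (f v - f u - df * (v - u))) by ring.
  rewrite Rabs_mult.
  assert (Hle : Rabs c * (eps / (Rabs c + 1)) <= eps).
  { apply (Rmult_le_reg_r (Rabs c + 1)); [lra|]. field_simplify; nra. }
  pose proof (Rabs_pos (v - u)). pose proof (Rabs_pos (f v - f u - df * (v - u))). nra.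
Qed.

Lemma deriv_within_comb L n (w : nat -> R) (F DF : nat -> R -> R) u :
  (forall i, (i < n)%nat -> deriv_within L (F i) u (DF i u)) ->
  deriv_within L (fun x => sumR n (fun i => w i * F i x)) u (sumR n (fun i => w i * DF i u)).
Proof.
  induction n as [|n IH]; intros H; simpl.
  - intros eps Heps. exists 1; split; [lra|]. intros v _ _.
    replace (0 - 0 - 0 * (v - u)) with 0 by ring. rewrite Rabs_R0.
    pose proof (Rabs_pos (v - u)). nra.
  - apply (deriv_within_plus L (fun x => sumR n (fun i => w i * F i x)) (fun x => w n * F n x)).
    + apply IH. intros; apply H; lia.
    + apply deriv_within_scal, H; lia.
Qed.

Lemma deriv_within_cont L f u d : deriv_within L f u d -> cont_within L f u.
Proof.
  intros H eps Heps.
  destruct (H 1 ltac:(lra)) as [d1 [Hd1 H1]].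
  pose proof (Rabs_pos d) as Hd.
  exists (Rmin d1 (eps / (Rabs d + 2))); split.
  { apply Rmin_glb_lt; [assumption|]. apply Rdiv_lt_0_compat; lra. }
  intros v Hv Hvu.
  pose proof (Rmin_l d1 (eps / (Rabs d + 2))); pose proof (Rmin_r d1 (eps / (Rabs d + 2))).
  specialize (H1 v Hv ltac:(lra)).
  replace (f v - f u) with ((f v - f u - d * (v - u)) + d * (v - u)) by ring.
  eapply Rle_lt_trans; [apply Rabs_triang|]. rewrite Rabs_mult.
  assert (Hvu' : Rabs (v - u) * (Rabs d + 2) < eps).
  { apply (Rmult_lt_reg_r (/ (Rabs d + 2))); [apply Rinv_0_lt_compat; lra|].
    field_simplify; lra. }
  pose proof (Rabs_pos (v - u)). nra.
Qed.

Lemma interval_point_near L u r : 0 < L -> 0 <= u <= L -> 0 < r ->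
  exists v, 0 <= v <= L /\ 0 < Rabs (v - u) < r.
Proof.
  intros HL Hu Hr.
  set (s := Rmin r L / 2).
  assert (0 < s < r /\ s <= L / 2) as [Hs Hs'].
  { unfold s. pose proof (Rmin_l r L); pose proof (Rmin_r r L).
    assert (0 < Rmin r L) by (apply Rmin_glb_lt; lra). lra. }
  destruct (Rle_dec (u + s) L).
  - exists (u + s). replace (u + s - u) with s by ring. rewrite Rabs_pos_eq; lra.
  - exists (u - s). replace (u - s - u) with (- s) by ring. rewrite Rabs_Ropp, Rabs_pos_eq; lra.
Qed.

Definition edge_ball (L t eps u : R) : Prop := 0 <= u <= L /\ Rabs (u - t) < eps.

Lemma deriv_within_locally_zero L t eps F u d : 0 < L ->
  (forall v, edge_ball L t eps v -> F v = 0) ->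
  edge_ball L t eps u -> deriv_within L F u d -> d = 0.
Proof.
  intros HL Hz [Hu Hut] Hd.
  destruct (Req_dec d 0) as [|Hne]; [assumption|exfalso].
  pose proof (Rabs_pos_lt d Hne) as Hdpos.
  destruct (Hd (Rabs d / 2) ltac:(lra)) as [delta [Hdelta H]].
  destruct (interval_point_near L u (Rmin delta (eps - Rabs (u - t))) HL Hu)
    as [v [Hv [Hvu Hvr]]]; [apply Rmin_glb_lt; lra|].
  pose proof (Rmin_l delta (eps - Rabs (u - t))); pose proof (Rmin_r delta (eps - Rabs (u - t))).
  assert (Hvt : Rabs (v - t) < eps).
  { replace (v - t) with ((v - u) + (u - t)) by ring.
    eapply Rle_lt_trans; [apply Rabs_triang | lra]. }
  specialize (H v Hv ltac:(lra)).
  rewrite (Hz v (conj Hv Hvt)), (Hz u (conj Hu Hut)) in H.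
  replace (0 - 0 - d * (v - u)) with (- (d * (v - u))) in H by ring.
  rewrite Rabs_Ropp, Rabs_mult in H. nra.
Qed.

(* [clamp L] extends a function on [0, L] by constants, turning the one-sided notions
   [cont_within]/[deriv_within] into the two-sided ones of Reals and Coquelicot. *)
Definition clamp (L x : R) : R := if Rle_dec x 0 then 0 else if Rle_dec L x then L else x.

Lemma clamp_in L x : 0 <= L -> 0 <= clamp L x <= L.
Proof. unfold clamp; intros; destruct (Rle_dec x 0); [|destruct (Rle_dec L x)]; lra. Qed.

Lemma clamp_id L x : 0 <= x <= L -> clamp L x = x.
Proof. unfold clamp; intros; destruct (Rle_dec x 0); [|destruct (Rle_dec L x)]; lra. Qed.

Lemma clamp_lipschitz L x y : 0 <= L -> Rabs (clamp L y - clamp L x) <= Rabs (y - x).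
Proof.
  intros HL. unfold clamp.
  destruct (Rle_dec x 0), (Rle_dec y 0); try destruct (Rle_dec L x); try destruct (Rle_dec L y);
    unfold Rabs; repeat destruct Rcase_abs; lra.
Qed.

Lemma continuity_pt_clamp L f x : 0 <= L -> (forall u, 0 <= u <= L -> cont_within L f u) ->
  continuity_pt (fun x => f (clamp L x)) x.
Proof.
  intros HL Hc eps Heps.
  destruct (Hc (clamp L x) (clamp_in L x HL) eps Heps) as [d [Hd H]].
  exists d; split; [assumption|]. intros y [_ Hy]. simpl in *. unfold R_dist in *.
  apply H; [apply clamp_in; assumption|].
  eapply Rle_lt_trans; [apply clamp_lipschitz | ]; assumption.
Qed.

Lemma is_derive_clamp L f u d : 0 < u < L -> deriv_within L f u d ->
  is_derive (fun x => f (clamp L x)) u d.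
Proof.
  intros Hu H. apply is_derive_Reals. intros eps Heps.
  destruct (H (eps / 2) ltac:(lra)) as [d1 [Hd1 H1]].
  assert (Hp : 0 < Rmin d1 (Rmin u (L - u))) by (apply Rmin_glb_lt; [|apply Rmin_glb_lt]; lra).
  exists (mkposreal _ Hp). intros h Hh Hhd. simpl in Hhd.
  pose proof (Rmin_l d1 (Rmin u (L - u))); pose proof (Rmin_r d1 (Rmin u (L - u))).
  pose proof (Rmin_l u (L - u)); pose proof (Rmin_r u (L - u)).
  assert (Hab : - Rabs h <= h <= Rabs h) by (unfold Rabs; destruct Rcase_abs; lra).
  rewrite !clamp_id by lra.
  specialize (H1 (u + h) ltac:(lra)). replace (u + h - u) with h in H1 by ring.
  specialize (H1 ltac:(lra)).
  replace ((f (u + h) - f u) / h - d) with ((f (u + h) - f u - d * h) / h) by (field; assumption).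
  assert (Hhp : 0 < Rabs h) by (apply Rabs_pos_lt; assumption).
  unfold Rdiv. rewrite Rabs_mult, Rabs_inv.
  apply (Rmult_lt_reg_r (Rabs h)); [assumption|].
  rewrite Rmult_assoc, Rinv_l, Rmult_1_r by lra. nra.
Qed.

Lemma cont_within_bounded L q : 0 <= L -> (forall u, 0 <= u <= L -> cont_within L q u) ->
  exists B, forall u, 0 <= u <= L -> Rabs (q u) <= B.
Proof.
  intros HL Hq.
  pose proof (fun c (_ : 0 <= c <= L) => continuity_pt_clamp L q c HL Hq) as Hc.
  destruct (continuity_ab_maj _ 0 L HL Hc) as [xmax [Hmax _]].
  destruct (continuity_ab_min _ 0 L HL Hc) as [xmin [Hmin _]].
  exists (Rabs (q (clamp L xmax)) + Rabs (q (clamp L xmin))).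
  intros u Hu. specialize (Hmax u Hu); specialize (Hmin u Hu).
  rewrite (clamp_id L u Hu) in Hmax, Hmin.
  revert Hmax Hmin. generalize (q (clamp L xmax)) (q (clamp L xmin)). intros.
  unfold Rabs; repeat destruct Rcase_abs; lra.
Qed.

(** * Uniqueness for h'' = q h *)

Definition energy (h h1 : R -> R) (x : R) : R := h x * h x + h1 x * h1 x.

Lemma weighted_energy_mvt L h h1 h2 s a b : 0 < L ->
  (forall u, 0 <= u <= L -> deriv_within L h u (h1 u) /\ deriv_within L h1 u (h2 u)) ->
  0 <= a <= L -> 0 <= b <= L ->
  exists c, Rmin a b <= c <= Rmax a b /\
    energy h h1 b * exp (s * b) - energy h h1 a * exp (s * a) =
    (2 * h c * h1 c + 2 * h1 c * h2 c + s * energy h h1 c) * exp (s * c) * (b - a).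
Proof.
  intros HL Hd Ha Hb.
  set (H := fun x => h (clamp L x)). set (H1 := fun x => h1 (clamp L x)).
  assert (Hcont : forall x, continuity_pt H x /\ continuity_pt H1 x).
  { intros x; split; apply continuity_pt_clamp; try lra; intros u Hu;
      eapply deriv_within_cont, Hd, Hu. }
  assert (Hexp : forall x, is_derive (fun t => exp (s * t)) x (s * exp (s * x))).
  { intros x. auto_derive; [exact I | ring]. }
  destruct (MVT_gen (fun x => (H x * H x + H1 x * H1 x) * exp (s * x)) a b
    (fun c => (2 * h c * h1 c + 2 * h1 c * h2 c + s * energy h h1 c) * exp (s * c)))
    as [c [Hc E]].
  - intros x Hx.
    assert (HxL : 0 < x < L).
    { pose proof (Rmin_glb a b 0 ltac:(lra) ltac:(lra)).
      pose proof (Rmax_lub a b L ltac:(lra) ltac:(lra)). lra. }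
    destruct (Hd x ltac:(lra)) as [D1 D2].
    pose proof (is_derive_clamp L h x (h1 x) HxL D1) as dH.
    pose proof (is_derive_clamp L h1 x (h2 x) HxL D2) as dH1.
    pose proof (Derive.is_derive_mult _ _ x _ _
      (is_derive_plus (fun t => H t * H t) (fun t => H1 t * H1 t) x _ _
         (Derive.is_derive_mult _ _ x _ _ dH dH) (Derive.is_derive_mult _ _ x _ _ dH1 dH1))
      (Hexp x)) as D.
    match goal with |- is_derive _ _ ?T => match type of D with is_derive _ _ ?l =>
      replace T with l; [exact D|] end end.
    unfold H, H1, energy, plus; simpl. rewrite clamp_id by lra. ring.
  - intros x _. apply (continuity_pt_mult (fun x => H x * H x + H1 x * H1 x)).
    + destruct (Hcont x); apply continuity_pt_plus; apply continuity_pt_mult; assumption.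
    + apply derivable_continuous_pt. exists (s * exp (s * x)). apply is_derive_Reals, Hexp.
  - exists c; split; [assumption|].
    unfold H, H1 in E. rewrite (clamp_id L a Ha), (clamp_id L b Hb) in E. exact E.
Qed.

Lemma Rabs_double_prod_le a b p K : Rabs p <= K -> Rabs (2 * a * b * p) <= K * (a * a + b * b).
Proof.
  intros Hp.
  rewrite !Rabs_mult, (Rabs_pos_eq 2) by lra.
  rewrite <- (Rabs_pos_eq (a * a)), <- (Rabs_pos_eq (b * b)), !Rabs_mult by nra.
  pose proof (Rabs_pos a); pose proof (Rabs_pos b); pose proof (Rabs_pos p).
  pose proof (Rle_0_sqr (Rabs a - Rabs b)). unfold Rsqr in *. nra.
Qed.

(* Gronwall-type argument: with |1 + q| <= K the energy h^2 + h'^2 satisfies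
   |E'| <= K E, so E(u) exp(-K |u - t0|) is monotone away from t0, where it vanishes. *)
Lemma second_order_linear_unique L h h1 h2 q t0 : 0 < L ->
  (forall u, 0 <= u <= L ->
     deriv_within L h u (h1 u) /\ deriv_within L h1 u (h2 u) /\ h2 u = q u * h u) ->
  (forall u, 0 <= u <= L -> cont_within L q u) ->
  0 <= t0 <= L -> h t0 = 0 -> h1 t0 = 0 -> forall u, 0 <= u <= L -> h u = 0.
Proof.
  intros HL Hd Hq Ht0 Hh0 Hh10 u Hu.
  destruct (cont_within_bounded L q ltac:(lra) Hq) as [B HB].
  set (K := 1 + B).
  assert (Hder : forall u, 0 <= u <= L -> deriv_within L h u (h1 u) /\ deriv_within L h1 u (h2 u))
    by (intros v Hv; destruct (Hd v Hv) as [? [? _]]; split; assumption).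
  assert (HE' : forall c, 0 <= c <= L ->
     Rabs (2 * h c * h1 c + 2 * h1 c * h2 c) <= K * energy h h1 c).
  { intros c Hc. destruct (Hd c Hc) as [_ [_ ->]].
    replace (2 * h c * h1 c + 2 * h1 c * (q c * h c)) with (2 * h c * h1 c * (1 + q c)) by ring.
    apply Rabs_double_prod_le. specialize (HB c Hc).
    eapply Rle_trans; [apply Rabs_triang|]. rewrite Rabs_R1. unfold K; lra. }
  assert (HE0 : energy h h1 t0 = 0) by (unfold energy; rewrite Hh0, Hh10; ring).
  assert (HEu : energy h h1 u <= 0).
  { destruct (Rle_dec t0 u).
    - destruct (weighted_energy_mvt L h h1 h2 (- K) t0 u HL Hder Ht0 Hu) as [c [Hc E]].
      rewrite Rmin_left, Rmax_right in Hc by lra.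
      specialize (HE' c ltac:(lra)). apply Rabs_le_between in HE'.
      assert (Hslope :
        (2 * h c * h1 c + 2 * h1 c * h2 c + - K * energy h h1 c) * exp (- K * c) <= 0)
        by (pose proof (exp_pos (- K * c)); nra).
      pose proof (exp_pos (- K * u)). rewrite HE0 in E. nra.
    - destruct (weighted_energy_mvt L h h1 h2 K u t0 HL Hder Hu Ht0) as [c [Hc E]].
      rewrite Rmin_left, Rmax_right in Hc by lra.
      specialize (HE' c ltac:(lra)). apply Rabs_le_between in HE'.
      assert (Hslope :
        0 <= (2 * h c * h1 c + 2 * h1 c * h2 c + K * energy h h1 c) * exp (K * c))
        by (pose proof (exp_pos (K * c)); nra).
      pose proof (exp_pos (K * u)). rewrite HE0 in E. nra. }
  unfold energy in HEu. nra.
Qed.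

Definition edge_continuous (G : metric_graph) (g : nat -> R -> R) : Prop :=
  forall e, (e < nE G)%nat -> forall u, 0 <= u <= len G e -> cont_within (len G e) (g e) u.

Lemma continuous_clamp_mult L f g x : 0 <= L ->
  (forall u, 0 <= u <= L -> cont_within L f u) -> (forall u, 0 <= u <= L -> cont_within L g u) ->
  continuous (fun x => f (clamp L x) * g (clamp L x)) x.
Proof.
  intros HL Hf Hg. apply continuity_pt_filterlim.
  apply (continuity_pt_mult (fun x => f (clamp L x)) (fun x => g (clamp L x)));
    apply continuity_pt_clamp; assumption.
Qed.

Lemma ex_RInt_mult_cont L f g : 0 <= L ->
  (forall u, 0 <= u <= L -> cont_within L f u) -> (forall u, 0 <= u <= L -> cont_within L g u) ->
  ex_RInt (fun t => f t * g t) 0 L.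
Proof.
  intros HL Hf Hg.
  apply (ex_RInt_ext (fun x => f (clamp L x) * g (clamp L x))).
  - intros x Hx. rewrite Rmin_left, Rmax_right in Hx by lra. rewrite clamp_id by lra. reflexivity.
  - apply (@ex_RInt_continuous R_CompleteNormedModule).
    intros z _. apply continuous_clamp_mult; assumption.
Qed.

Lemma RInt_comb n (w : nat -> R) (F : nat -> R -> R) a b :
  (forall i, (i < n)%nat -> ex_RInt (F i) a b) ->
  ex_RInt (fun t => sumR n (fun i => w i * F i t)) a b /\
  RInt (fun t => sumR n (fun i => w i * F i t)) a b = sumR n (fun i => w i * RInt (F i) a b).
Proof.
  induction n as [|n IH]; intros H; simpl.
  - split; [apply ex_RInt_const|]. rewrite RInt_const. apply Rmult_0_r.
  - destruct IH as [Hex HI]; [intros; apply H; lia|].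
    assert (Hn : ex_RInt (fun t => w n * F n t) a b) by (apply (ex_RInt_scal (F n)), H; lia).
    split; [apply (ex_RInt_plus _ (fun t => w n * F n t)); assumption|].
    rewrite (RInt_plus _ (fun t => w n * F n t)) by assumption.
    rewrite HI, (RInt_scal (F n)) by (apply H; lia). reflexivity.
Qed.

Lemma l2_inner_comb_r G (g : nat -> R -> R) (F : nat -> nat -> R -> R) M (w : nat -> R) :
  metric_graph_wf G -> edge_continuous G g -> (forall i, (i < M)%nat -> edge_continuous G (F i)) ->
  l2_inner G g (fun e t => sumR M (fun i => w i * F i e t)) =
  sumR M (fun i => w i * l2_inner G g (F i)).
Proof.
  intros [_ [Hw _]] Hg HF. unfold l2_inner.
  rewrite (sumR_ext _ _
    (fun e => sumR M (fun i => w i * RInt (fun t => g e t * F i e t) 0 (len G e)))).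
  - rewrite sumR_swap. apply sumR_ext. intros i _. apply sumR_scal.
  - intros e He. destruct (Hw e He) as [HL _].
    rewrite (RInt_ext _ (fun t => sumR M (fun i => w i * (g e t * F i e t))))
      by (intros; rewrite <- sumR_scal; apply sumR_ext; intros; ring).
    apply RInt_comb. intros i Hi.
    apply ex_RInt_mult_cont; [lra | apply Hg | apply HF]; assumption.
Qed.

Lemma RInt_sq_pos L g t : 0 < L -> 0 <= t <= L ->
  (forall u, 0 <= u <= L -> cont_within L g u) -> g t <> 0 -> 0 < RInt (fun x => g x * g x) 0 L.
Proof.
  intros HL Ht Hg Hgt.
  set (Gc := fun x => g (clamp L x) * g (clamp L x)).
  assert (Hcp : forall x, continuity_pt Gc x)
    by (intros; apply continuity_pt_filterlim, continuous_clamp_mult; auto; lra).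
  assert (Hex : forall a b, ex_RInt Gc a b).
  { intros a b. apply (@ex_RInt_continuous R_CompleteNormedModule).
    intros; apply continuity_pt_filterlim, Hcp. }
  assert (Hnonneg : forall a b, a <= b -> 0 <= RInt Gc a b)
    by (intros; apply RInt_ge_0; auto; intros; apply Rle_0_sqr).
  rewrite (RInt_ext _ Gc) by (intros x Hx; rewrite Rmin_left, Rmax_right in Hx by lra;
    unfold Gc; rewrite clamp_id by lra; reflexivity).
  assert (HGt : 0 < Gc t) by (unfold Gc; rewrite clamp_id by lra; apply (Rsqr_pos_lt _ Hgt)).
  destruct (Hcp t (Gc t / 2) ltac:(lra)) as [d [Hd Hnear]]. simpl in Hnear. unfold R_dist in Hnear.
  set (a := Rmax 0 (t - d / 2)). set (b := Rmin L (t + d / 2)).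
  assert (Hab : 0 <= a < b /\ b <= L /\ t - d / 2 <= a /\ b <= t + d / 2).
  { unfold a, b, Rmax, Rmin. destruct Rle_dec; destruct Rle_dec; lra. }
  assert (Hmid : 0 < RInt Gc a b).
  { apply RInt_gt_0; [lra| |intros; apply continuity_pt_filterlim, Hcp].
    intros x Hx. destruct (Req_dec x t) as [->|Hne]; [assumption|].
    assert (Hxt : Rabs (x - t) < d) by (unfold Rabs; destruct Rcase_abs; lra).
    specialize (Hnear x (conj (conj I (not_eq_sym Hne)) Hxt)).
    unfold Rabs in Hnear; destruct Rcase_abs in Hnear; lra. }
  pose proof (RInt_Chasles Gc 0 a L (Hex _ _) (Hex _ _)) as C1.
  pose proof (RInt_Chasles Gc a b L (Hex _ _) (Hex _ _)) as C2.
  unfold plus in C1, C2; simpl in C1, C2.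
  pose proof (Hnonneg 0 a ltac:(lra)). pose proof (Hnonneg b L ltac:(lra)). lra.
Qed.

Lemma l2_inner_self_pos G g e t : metric_graph_wf G -> edge_continuous G g ->
  is_point G e t -> g e t <> 0 -> 0 < l2_inner G g g.
Proof.
  intros [_ [Hw _]] Hg [He Ht] Hgt. unfold l2_inner.
  apply (sumR_pos _ _ e He).
  - intros e' He'. destruct (Hw e' He') as [HL _].
    apply RInt_ge_0; [lra | apply ex_RInt_mult_cont; try apply Hg; auto; lra |].
    intros; apply Rle_0_sqr.
  - destruct (Hw e He) as [HL _]. apply (RInt_sq_pos _ _ t); auto.
Qed.

Lemma orthogonal_combination_coeff_zero G (g : nat -> nat -> R -> R) M (w : nat -> R) j :
  metric_graph_wf G -> (forall i, (i < M)%nat -> edge_continuous G (g i)) -> (j < M)%nat ->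
  (forall i, (i < M)%nat -> i <> j -> l2_inner G (g j) (g i) = 0) ->
  (exists e t, is_point G e t /\ g j e t <> 0) ->
  (forall e t, is_point G e t -> sumR M (fun i => w i * g i e t) = 0) ->
  w j = 0.
Proof.
  intros Hwf Hg Hj Horth [e [t [Hpt Hgt]]] Hzero.
  assert (Hproj : l2_inner G (g j) (fun e t => sumR M (fun i => w i * g i e t)) =
                  w j * l2_inner G (g j) (g j)).
  { rewrite l2_inner_comb_r by auto.
    apply (sumR_single M (fun i => w i * l2_inner G (g j) (g i)) j Hj).
    intros i Hi Hne. rewrite Horth by assumption. ring. }
  assert (Hnull : l2_inner G (g j) (fun e t => sumR M (fun i => w i * g i e t)) = 0).
  { destruct Hwf as [_ [Hw _]]. unfold l2_inner. apply sumR_zero. intros e' He'.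
    destruct (Hw e' He') as [HL _].
    rewrite (RInt_ext _ (fun _ => 0)).
    - rewrite RInt_const. apply Rmult_0_r.
    - intros x Hx. rewrite Rmin_left, Rmax_right in Hx by lra.
      rewrite Hzero by (split; [assumption | lra]). apply Rmult_0_r. }
  pose proof (l2_inner_self_pos G (g j) e t Hwf (Hg j Hj) Hpt Hgt).
  rewrite Hnull in Hproj. symmetry in Hproj.
  apply Rmult_integral in Hproj as [|]; [assumption | lra].
Qed.

Lemma sumN_ge_term n g i : (i < n)%nat -> (g i <= sumN n g)%nat.
Proof.
  induction n as [|n IH]; simpl; intros Hi; [lia|].
  destruct (Nat.eq_dec i n) as [->|]; [lia|]. specialize (IH ltac:(lia)). lia.
Qed.

Lemma sumN_ge_two_terms n g i j : (i < n)%nat -> (j < n)%nat -> i <> j ->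
  (g i + g j <= sumN n g)%nat.
Proof.
  induction n as [|n IH]; simpl; intros Hi Hj Hij; [lia|].
  destruct (Nat.eq_dec i n) as [->|]; [pose proof (sumN_ge_term n g j ltac:(lia)); lia|].
  destruct (Nat.eq_dec j n) as [->|]; [pose proof (sumN_ge_term n g i ltac:(lia)); lia|].
  specialize (IH ltac:(lia) ltac:(lia) Hij). lia.
Qed.

Definition incident (G : metric_graph) (e v : nat) : Prop := src G e = v \/ tgt G e = v.

Lemma deg_ge2_two_edges G v e1 e2 : (e1 < nE G)%nat -> (e2 < nE G)%nat -> e1 <> e2 ->
  incident G e1 v -> incident G e2 v -> (2 <= deg G v)%nat.
Proof.
  intros He1 He2 Hne I1 I2. unfold deg.
  eapply Nat.le_trans; [|apply (sumN_ge_two_terms _ _ e1 e2 He1 He2 Hne)]. cbv beta.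
  destruct I1 as [-> | ->], I2 as [-> | ->]; rewrite !Nat.eqb_refl;
    repeat match goal with |- context [Nat.eqb ?a ?b] => destruct (Nat.eqb a b) end; lia.
Qed.

Lemma only_edge G e : metric_graph_wf G -> (e < nE G)%nat ->
  (deg G (src G e) < 2)%nat -> (deg G (tgt G e) < 2)%nat ->
  forall e', (e' < nE G)%nat -> e' = e.
Proof.
  intros [_ [Hw Hconn]] He Hs Ht.
  assert (Hends : forall x y, clos_refl_trans nat (adjacent G) x y ->
            incident G e x -> incident G e y).
  { intros x y Hxy. induction Hxy as [x y [e2 [He2 Hadj]]| |]; auto.
    intros Hx. destruct (Nat.eq_dec e2 e) as [->|Hne].
    - destruct Hadj as [[<- <-]|[<- <-]]; [right|left]; reflexivity.
    - exfalso.
      assert (I2 : incident G e2 x)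
        by (destruct Hadj as [[? _]|[_ ?]]; [left|right]; assumption).
      pose proof (deg_ge2_two_edges G x e2 e He2 He Hne I2 Hx).
      destruct Hx as [<-|<-]; lia. }
  intros e' He'. destruct (Nat.eq_dec e' e) as [|Hne]; [assumption|exfalso].
  destruct (Hw e He) as [_ [Hse _]]. destruct (Hw e' He') as [_ [Hse' _]].
  assert (I' : incident G e (src G e'))
    by (apply (Hends _ _ (Hconn _ _ Hse Hse')); left; reflexivity).
  pose proof (deg_ge2_two_edges G _ e' e He' He Hne (or_introl eq_refl) I').
  destruct I' as [E|E]; rewrite <- E in *; lia.
Qed.

Lemma eigen_relation_shift L V t eps M (mu w : nat -> R) (g g1 g2 : nat -> R -> R) : 0 < L ->
  (forall i, (i < M)%nat -> forall u, 0 <= u <= L ->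
     deriv_within L (g i) u (g1 i u) /\ deriv_within L (g1 i) u (g2 i u) /\
     - g2 i u + V u * g i u = mu i * g i u) ->
  (forall u, edge_ball L t eps u -> sumR M (fun i => w i * g i u) = 0) ->
  forall u, edge_ball L t eps u -> sumR M (fun i => mu i * w i * g i u) = 0.
Proof.
  intros HL Heq Hrel u Hball.
  assert (Hd1 : forall v, edge_ball L t eps v -> sumR M (fun i => w i * g1 i v) = 0).
  { intros v Hv.
    apply (deriv_within_locally_zero L t eps (fun x => sumR M (fun i => w i * g i x)) v _
      HL Hrel Hv).
    apply deriv_within_comb. intros i Hi. apply Heq, Hv; assumption. }
  assert (Hd2 : sumR M (fun i => w i * g2 i u) = 0).
  { apply (deriv_within_locally_zero L t eps (fun x => sumR M (fun i => w i * g1 i x)) u _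
      HL Hd1 Hball).
    apply deriv_within_comb. intros i Hi. apply Heq, Hball; assumption. }
  transitivity (V u * sumR M (fun i => w i * g i u) - sumR M (fun i => w i * g2 i u)).
  - rewrite <- sumR_scal, <- sumR_minus. apply sumR_ext. intros i Hi.
    destruct (Heq i Hi u (proj1 Hball)) as [_ [_ E]].
    replace (mu i * w i * g i u) with (w i * (mu i * g i u)) by ring. rewrite <- E. ring.
  - rewrite Hd2, Hrel by auto. ring.
Qed.

Definition eigen_equations (G : metric_graph) (W : nat -> R -> R) (lam : R)
    (f D1 D2 : nat -> R -> R) : Prop :=
  (forall e, (e < nE G)%nat -> forall t, 0 <= t <= len G e ->
     deriv_within (len G e) (f e) t (D1 e t) /\
     deriv_within (len G e) (D1 e) t (D2 e t) /\
     - D2 e t + W e t * f e t = lam * f e t) /\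
  (forall v, (v < nV G)%nat ->
     ((deg G v = 1%nat ->
         forall e b, (e < nE G)%nat -> end_vertex G e b = v -> f e (end_pos G e b) = 0) /\
      ((2 <= deg G v)%nat ->
         (forall e1 b1 e2 b2, same_vertex G e1 b1 e2 b2 -> end_vertex G e1 b1 = v ->
            f e1 (end_pos G e1 b1) = f e2 (end_pos G e2 b2)) /\
         sumR (nE G) (fun e =>
            (if Nat.eqb (src G e) v then D1 e 0 else 0) +
            (if Nat.eqb (tgt G e) v then - D1 e (len G e) else 0)) = 0))).

Lemma eigen_derivatives_choice G W M (mu : nat -> R) (g : nat -> nat -> R -> R) :
  (forall i, (i < M)%nat -> is_eigenpair G W (mu i) (g i)) ->
  exists D1 D2 : nat -> nat -> R -> R,
    forall i, (i < M)%nat -> eigen_equations G W (mu i) (g i) (D1 i) (D2 i).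
Proof.
  intros H.
  destruct (functional_choice (fun i (D : (nat -> R -> R) * (nat -> R -> R)) =>
              (i < M)%nat -> eigen_equations G W (mu i) (g i) (fst D) (snd D))) as [D HD].
  - intros i. destruct (Nat.lt_ge_cases i M) as [Hi|Hi].
    + destruct (H i Hi) as [[D1 [D2 HD]] _]. exists (D1, D2). intros _. exact HD.
    + exists (g i, g i). intros Hlt. lia.
  - exists (fun i => fst (D i)), (fun i => snd (D i)). exact HD.
Qed.

Lemma eigen_equations_edge_continuous G W lam g D1 D2 :
  eigen_equations G W lam g D1 D2 -> edge_continuous G g.
Proof. intros [Hedge _] e He u Hu. eapply deriv_within_cont, Hedge; eassumption. Qed.

Lemma eigen_equations_comb G W M (mu w : nat -> R) (g D1 D2 : nat -> nat -> R -> R) nu :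
  (forall i, (i < M)%nat -> eigen_equations G W (mu i) (g i) (D1 i) (D2 i)) ->
  (forall i, (i < M)%nat -> w i <> 0 -> mu i = nu) ->
  eigen_equations G W nu (fun e t => sumR M (fun i => w i * g i e t))
    (fun e t => sumR M (fun i => w i * D1 i e t)) (fun e t => sumR M (fun i => w i * D2 i e t)).
Proof.
  intros H Hmu. split.
  - intros e He t Ht. split; [|split].
    + apply (deriv_within_comb _ M w (fun i => g i e) (fun i => D1 i e)).
      intros i Hi. apply (H i Hi); assumption.
    + apply (deriv_within_comb _ M w (fun i => D1 i e) (fun i => D2 i e)).
      intros i Hi. apply (H i Hi); assumption.
    + rewrite <- !sumR_scal, <- sumR_opp, <- sumR_plus. apply sumR_ext. intros i Hi.
      destruct (H i Hi) as [Hedge _]. destruct (Hedge e He t Ht) as [_ [_ E]].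
      destruct (Req_dec (w i) 0) as [->|Hne]; [ring|].
      rewrite <- (Hmu i Hi Hne).
      transitivity (w i * (- D2 i e t + W e t * g i e t)); [ring | rewrite E; ring].
  - intros v Hv. split; [|intros Hdeg; split].
    + intros Hdeg e b He Hb. apply sumR_zero. intros i Hi.
      destruct (H i Hi) as [_ Hvert]. rewrite (proj1 (Hvert v Hv) Hdeg e b He Hb). ring.
    + intros e1 b1 e2 b2 Hs Hb. apply sumR_ext. intros i Hi.
      destruct (H i Hi) as [_ Hvert]. rewrite (proj1 (proj2 (Hvert v Hv) Hdeg) e1 b1 e2 b2 Hs Hb).
      reflexivity.
    + rewrite (sumR_ext _ _ (fun e => sumR M (fun i => w i *
          ((if Nat.eqb (src G e) v then D1 i e 0 else 0) +
           (if Nat.eqb (tgt G e) v then - D1 i e (len G e) else 0))))).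
      * rewrite sumR_swap. apply sumR_zero. intros i Hi. rewrite sumR_scal.
        destruct (H i Hi) as [_ Hvert]. rewrite (proj2 (proj2 (Hvert v Hv) Hdeg)). ring.
      * intros e He.
        transitivity (sumR M (fun i => (if Nat.eqb (src G e) v then 1 else 0) * (w i * D1 i e 0))
          + sumR M (fun i => (if Nat.eqb (tgt G e) v then -1 else 0) * (w i * D1 i e (len G e)))).
        { rewrite !sumR_scal. destruct Nat.eqb, Nat.eqb; ring. }
        rewrite <- sumR_plus. apply sumR_ext. intros i _. destruct Nat.eqb, Nat.eqb; ring.
Qed.

Lemma eigen_solution_edge_zero G W nu h D1 D2 e t eps :
  metric_graph_wf G -> potential_C1 G W -> eigen_equations G W nu h D1 D2 ->
  (e < nE G)%nat -> 0 <= t <= len G e -> 0 < eps ->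
  (forall u, edge_ball (len G e) t eps u -> h e u = 0) ->
  forall u, 0 <= u <= len G e -> h e u = 0.
Proof.
  intros [_ [Hw _]] [HW _] [Hedge _] He Ht Heps Hz.
  destruct (Hw e He) as [HL _].
  apply (second_order_linear_unique (len G e) (h e) (D1 e) (D2 e) (fun x => W e x - nu) t HL).
  - intros u Hu. destruct (Hedge e He u Hu) as [Hd1 [Hd2 E]].
    repeat split; [assumption | assumption | lra].
  - intros u Hu eps' Heps'. destruct (HW e He) as [dW HdW].
    destruct (deriv_within_cont _ _ _ _ (proj1 (HdW u Hu)) eps' Heps') as [d [Hd Hnear]].
    exists d; split; [assumption|]. intros v Hv Hvu.
    replace (W e v - nu - (W e u - nu)) with (W e v - W e u) by ring. auto.
  - assumption.
  - apply Hz. split; [assumption|]. rewrite Rminus_diag, Rabs_R0. assumption.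
  - apply (deriv_within_locally_zero (len G e) t eps (h e) t _ HL Hz).
    + split; [assumption|]. rewrite Rminus_diag, Rabs_R0. assumption.
    + apply (Hedge e He t Ht).
Qed.

Lemma eigen_solution_locally_zero G W nu h D1 D2 e t eps :
  metric_graph_wf G -> potential_C1 G W -> W_generic G W -> eigen_equations G W nu h D1 D2 ->
  (e < nE G)%nat -> 0 <= t <= len G e -> 0 < eps ->
  (forall u, edge_ball (len G e) t eps u -> h e u = 0) ->
  forall e' t', is_point G e' t' -> h e' t' = 0.
Proof.
  intros Hwf HW Hgen Hh He Ht Heps Hz.
  pose proof (eigen_solution_edge_zero G W nu h D1 D2 e t eps Hwf HW Hh He Ht Heps Hz) as Hedge.
  assert (Hinner : forall b, (2 <= deg G (end_vertex G e b))%nat ->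
            forall e' t', is_point G e' t' -> h e' t' = 0).
  { intros b Hdeg e' t' Hpt. apply NNPP. intros Hne.
    refine (Hgen nu h (conj (ex_intro _ D1 (ex_intro _ D2 Hh)) _) e b He Hdeg _); [eauto|].
    apply Hedge. destruct b; simpl; lra. }
  destruct (Nat.lt_ge_cases (deg G (src G e)) 2) as [Hs|Hs]; [|exact (Hinner false Hs)].
  destruct (Nat.lt_ge_cases (deg G (tgt G e)) 2) as [Ht2|Ht2]; [|exact (Hinner true Ht2)].
  intros e' t' [He' Ht']. rewrite (only_edge G e Hwf He Hs Ht2 e' He') in *. auto.
Qed.

Lemma eigen_comb_unique_continuation G W (mu : nat -> R) (g : nat -> nat -> R -> R) M
    (c : nat -> R) e t eps j :
  metric_graph_wf G -> potential_C1 G W -> W_generic G W ->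
  (forall i, (i < M)%nat -> is_eigenpair G W (mu i) (g i)) ->
  (forall i, (i < M)%nat -> i <> j -> l2_inner G (g j) (g i) = 0) ->
  (e < nE G)%nat -> 0 <= t <= len G e -> 0 < eps ->
  (forall u, edge_ball (len G e) t eps u -> sumR M (fun i => c i * g i e u) = 0) ->
  (j < M)%nat -> c j = 0.
Proof.
  intros Hwf HW Hgen Heig Horth He Ht Heps Hc Hj.
  destruct (eigen_derivatives_choice G W M mu g Heig) as [D1 [D2 HD]].
  set (w := fun i => if Req_EM_T (mu i) (mu j) then c i else 0).
  assert (Hw : forall u, edge_ball (len G e) t eps u -> sumR M (fun i => w i * g i e u) = 0).
  { apply (relation_spectral_projection _ M (fun i => g i e) mu); [|exact Hc].
    intros w' Hw'. apply (eigen_relation_shift (len G e) (W e) t eps M mu w' _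
      (fun i => D1 i e) (fun i => D2 i e)); [apply Hwf, He | |exact Hw'].
    intros i Hi. apply (proj1 (HD i Hi) e He). }
  assert (Hh : eigen_equations G W (mu j) (fun e t => sumR M (fun i => w i * g i e t))
     (fun e t => sumR M (fun i => w i * D1 i e t)) (fun e t => sumR M (fun i => w i * D2 i e t))).
  { apply (eigen_equations_comb G W M mu); [exact HD|].
    intros i _ Hne. unfold w in Hne. destruct Req_EM_T; [assumption | contradiction]. }
  assert (Hwj : w j = 0).
  { apply (orthogonal_combination_coeff_zero G g M w j Hwf); try assumption.
    - intros i Hi. eapply eigen_equations_edge_continuous, HD, Hi.
    - apply (Heig j Hj).
    - exact (eigen_solution_locally_zero G W (mu j) _ _ _ e t eps Hwf HW Hgen Hh He Ht Heps Hw). }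
  unfold w in Hwj. destruct Req_EM_T as [_|Hne]; [exact Hwj | contradiction (Hne eq_refl)].
Qed.

Theorem lemma4 (G : metric_graph) (W : nat -> R -> R)
    (lam : nat -> R) (f : nat -> nat -> R -> R)
    (M : nat) (ks : nat -> nat) (a : nat -> R) :
  metric_graph_wf G ->
  potential_C1 G W ->
  eigen_enumeration G W lam f ->
  W_generic G W ->
  (0 < M)%nat ->
  (forall i j, (i < j)%nat -> (j < M)%nat -> (ks i < ks j)%nat) ->
  (forall i, (i < M)%nat -> a i <> 0) ->
  forall y : R, forall U : nat -> R -> Prop,
    graph_open G U ->
    (exists e t, is_point G e t /\ U e t) ->
    exists e t, is_point G e t /\ U e t /\
      sumR M (fun i => a i * exp (- lam (ks i) * y) * f (ks i) e t) <> 0.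
Proof.
  intros Hwf HW [Heig [_ [Horth _]]] Hgen HM Hks Ha y U [_ HUopen] [e [t [[He Ht] HUt]]].
  apply NNPP. intros Hno.
  destruct (HUopen e t (conj He Ht) HUt) as [eps [Heps [HJ _]]].
  assert (Hc0 : a 0%nat * exp (- lam (ks 0%nat) * y) = 0).
  { apply (eigen_comb_unique_continuation G W (fun i => lam (ks i)) (fun i => f (ks i)) M
      (fun i => a i * exp (- lam (ks i) * y)) e t eps 0); try assumption.
    - intros i _. apply Heig.
    - intros i Hi Hne. apply Horth. specialize (Hks 0%nat i ltac:(lia) Hi). lia.
    - intros u [Hu Hut]. apply NNPP. intros Hne. apply Hno. exists e, u.
      split; [split; assumption|]. split; [apply HJ; assumption | exact Hne]. }
  pose proof (exp_pos (- lam (ks 0%nat) * y)).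
  apply Rmult_integral in Hc0 as [H0|H0]; [exact (Ha 0%nat HM H0) | lra].
Qed.
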